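(* Let $d,r,k$ be positive integers and $\nu>0$. Let $M_\sharp=X_\sharp X_\sharp^\top$ with $X_\sharp\in\mathbb{R}^{d\times r}$ of rank $r$, $\|X_\sharp\|_{\mathrm{op}}\le1$ and $\|X_\sharp\|_{2,\infty}\le\sqrt{\nu r/d}$; let $S_\sharp\in\mathbb{R}^{d\times d}$ be symmetric with at most $k$ nonzero entries per column; and let $W=M_\sharp+S_\sharp$. Let $\mathcal{X}=\{X\in\mathbb{R}^{d\times r}:\|X\|_{2,\infty}\le\sqrt{\nu r/d}\}$ and $\mathcal{S}=\{S\in\mathbb{R}^{d\times d}\text{ symmetric}:\|Se_i\|_1\le\|S_\sharp e_i\|_1\ \forall i\}$. Define $F((X,S))=\|XX^\top+S-W\|_F$ and $F_Y((X,S))=\|YY^\top+Y(X-Y)^\top+(X-Y)Y^\top+S-W\|_F$. Then for all $X,Y\in\mathcal{X}$, $S\in\mathcal{S}$: $$F((X,S))^2\ge\Big(\tfrac12\sigma_r^2(X_\sharp)-10\sqrt{\tfrac{\nu rk}{d}}\Big)\Big(\mathrm{dist}(X,\mathcal{D}^*(M_\sharp))^2+\|S-S_\sharp\|_F^2\Big),$$ $$|F((X,S))-F_Y((X,S))|\le\|X-Y\|_F^2,$$ and for all $X_1,X_2\in\mathcal{X}$, $S_1,S_2\in\mathcal{S}$, $$|F((X_1,S_1))-F((X_2,S_2))|\le2\sqrt{\nu r}\|X_1-X_2\|_F+\|S_1-S_2\|_F.$$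
   Context: $\|X\|_{2,\infty}$ is the maximum Euclidean row norm; $\|\cdot\|_{\mathrm{op}}$ the spectral norm; $\sigma_r$ the $r$-th largest singular value; $e_i$ the $i$-th standard basis vector. $\mathcal{D}^*(M_\sharp)=\{X_\sharp R:R\in O(r)\}$ and $\mathrm{dist}$ is Frobenius distance. *)

From HB Require Import structures.
From mathcomp Require Import all_boot all_order all_algebra.
Set Implicit Arguments. Unset Strict Implicit. Unset Printing Implicit Defensive.
Import Order.TTheory GRing.Theory Num.Theory.
Local Open Scope ring_scope.

Definition frob (R : rcfType) m n (A : 'M[R]_(m, n)) : R :=
  Num.sqrt (\sum_(i < m) \sum_(j < n) A i j ^+ 2).

Definition rownorm (R : rcfType) m n (A : 'M[R]_(m, n)) (i : 'I_m) : R :=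
  Num.sqrt (\sum_(j < n) A i j ^+ 2).

Definition norm2inf (R : rcfType) m n (A : 'M[R]_(m, n)) : R :=
  \big[Num.max/0]_(i < m) rownorm A i.

Definition vnorm (R : rcfType) n (v : 'cV[R]_n) : R :=
  Num.sqrt (\sum_(i < n) v i 0 ^+ 2).

Definition opnorm_le (R : rcfType) m n (A : 'M[R]_(m, n)) (c : R) : Prop :=
  forall v : 'cV[R]_n, vnorm (A *m v) <= c * vnorm v.

Definition col_l1 (R : rcfType) m n (A : 'M[R]_(m, n)) (j : 'I_n) : R :=
  \sum_(i < m) `|A i j|.

Definition orthogonal_mx (R : rcfType) r (Q : 'M[R]_r) : Prop :=
  Q^T *m Q = 1%:M.

Definition is_singular_values (R : rcfType) d r (X : 'M[R]_(d, r))
    (sig : 'I_r -> R) : Prop :=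
  exists (U : 'M[R]_(d, r)) (V : 'M[R]_r),
    [/\ U^T *m U = 1%:M, V^T *m V = 1%:M,
        X = U *m diag_mx (\row_j sig j) *m V^T,
        (forall j, 0 <= sig j) &
        (forall i j : 'I_r, (i <= j)%N -> sig j <= sig i)].

Definition sigma_last (R : rcfType) d r (X : 'M[R]_(d, r)) (s : R) : Prop :=
  exists sig, is_singular_values X sig /\
    (forall j : 'I_r, val j = r.-1 -> sig j = s).

(* delta = dist(X, D*(M)) = inf_{Q in O(r)} ||X - Xs Q||_F *)
Definition is_dist_orbit (R : rcfType) d r (Xs X : 'M[R]_(d, r)) (delta : R)
  : Prop :=
  (forall Q : 'M[R]_r, orthogonal_mx Q -> delta <= frob (X - Xs *m Q)) /\
  (forall l : R, (forall Q : 'M[R]_r, orthogonal_mx Q -> l <= frob (X - Xs *m Q))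
                 -> l <= delta).

Definition symmetric_mx (R : rcfType) n (S : 'M[R]_n) : Prop := S^T = S.

From HB Require Import structures.
From mathcomp Require Import all_boot all_order all_algebra.
From mathcomp Require Import ring lra.
From mathcomp Require Import complex.
Import Order.TTheory GRing.Theory Num.Theory.
Set Implicit Arguments. Unset Strict Implicit. Unset Printing Implicit Defensive.
Local Open Scope ring_scope.

(* Write Z = Xs Q for an orthogonal Q aligning Xs with X, D = X - Z and
   T = S - Ss, so that X X^T + S - W = E + T with E = X X^T - Xs Xs^T.
   The last two claims are pure Frobenius-norm algebra: the residual of the
   linearization around Y is (X - Y)(X - Y)^T, and the residual map is
   Lipschitz because X1 X1^T - X2 X2^T = X1 (X1 - X2)^T + (X1 - X2) X2^T and
   incoherent matrices have Frobenius norm at most sqrt (nu r).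
   The first claim combines three estimates:
   - choosing Q from a polar decomposition of Xs^T X (proved below via
     Householder deflation of a singular pair) makes Z^T D symmetric and
     Z^T X positive semidefinite, which gives ||E||^2 >= sigma_r^2 ||D||^2 / 2;
   - incoherence of X, Z and the column l1-cone condition on T (which has at
     most k large entries per column) bound the cross term <E, T> by
     4 sqrt (nu r k / d) ||D|| ||T||;
   - the distance from X to the orbit {Xs Q} is at most ||D||, and an
     elementary quadratic inequality concludes. *)

Section Frobenius.
Variable R : rcfType.

Lemma cauchy_schwarz (I : finType) (P : pred I) (f g : I -> R) :
  (\sum_(i | P i) f i * g i) ^+ 2 <=
  (\sum_(i | P i) f i ^+ 2) * (\sum_(i | P i) g i ^+ 2).
Proof.
set a := \sum_(i | P i) f i ^+ 2; set b := \sum_(i | P i) g i ^+ 2.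
set c := \sum_(i | P i) f i * g i.
have b0 : 0 <= b by apply: sumr_ge0 => i _; apply: sqr_ge0.
have [b_eq0|b_neq0] := eqVneq b 0.
  have g0 i : P i -> g i = 0.
    move=> Pi; apply/eqP; rewrite -sqrf_eq0; apply/eqP.
    exact: (psumr_eq0P (fun i _ => sqr_ge0 (g i)) b_eq0 Pi).
  by rewrite /c big1 ?expr0n ?b_eq0 ?mulr0 // => i Pi; rewrite g0 ?mulr0.
have b_gt0 : 0 < b by rewrite lt_def b_neq0 b0.
(* The discriminant identity sum (b f_i - c g_i)^2 = b (a b - c^2). *)
have sq_ge0 : 0 <= \sum_(i | P i) (b * f i - c * g i) ^+ 2.
  by apply: sumr_ge0 => i _; apply: sqr_ge0.
have discr : \sum_(i | P i) (b * f i - c * g i) ^+ 2 = b * (a * b - c ^+ 2).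
  rewrite (eq_bigr (fun i => b ^+ 2 * f i ^+ 2 - (2 * b * c) * (f i * g i)
                             + c ^+ 2 * g i ^+ 2)); last by move=> i _; ring.
  by rewrite big_split sumrB /= -!mulr_sumr -/a -/b -/c; ring.
by rewrite -subr_ge0; rewrite discr pmulr_rge0 in sq_ge0.
Qed.

Lemma trmxZ m n (a : R) (A : 'M[R]_(m, n)) : (a *: A)^T = a *: A^T.
Proof. exact: linearZ. Qed.

Lemma trmxB m n (A B : 'M[R]_(m, n)) : (A - B)^T = A^T - B^T.
Proof. exact: linearB. Qed.

Lemma ler_norm_sqrt (x y : R) : 0 <= y -> x ^+ 2 <= y -> `|x| <= Num.sqrt y.
Proof. by move=> y0 h; rewrite -sqrtr_sqr ler_sqrt. Qed.

Definition sqfrob m n (A : 'M[R]_(m, n)) : R := \sum_(i < m) \sum_(j < n) A i j ^+ 2.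
Definition fdot m n (A B : 'M[R]_(m, n)) : R := \sum_(i < m) \sum_(j < n) A i j * B i j.

Lemma sqfrob_ge0 m n (A : 'M[R]_(m, n)) : 0 <= sqfrob A.
Proof. by apply: sumr_ge0 => i _; apply: sumr_ge0 => j _; apply: sqr_ge0. Qed.

Lemma frob_ge0 m n (A : 'M[R]_(m, n)) : 0 <= frob A.
Proof. exact: sqrtr_ge0. Qed.

Lemma sqr_frob m n (A : 'M[R]_(m, n)) : frob A ^+ 2 = sqfrob A.
Proof. by rewrite sqr_sqrtr // sqfrob_ge0. Qed.

Lemma fdot_cauchy_schwarz m n (A B : 'M[R]_(m, n)) :
  `|fdot A B| <= frob A * frob B.
Proof.
rewrite /frob -sqrtrM ?sqfrob_ge0 //; apply: ler_norm_sqrt.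
  by apply: mulr_ge0; apply: sqfrob_ge0.
by rewrite /fdot /sqfrob !pair_big; apply: (cauchy_schwarz xpredT (fun p => A p.1 p.2)).
Qed.

Lemma fdotDl m n (A B C : 'M[R]_(m, n)) :
  fdot (A + B) C = fdot A C + fdot B C.
Proof.
rewrite /fdot -big_split; apply: eq_bigr => i _; rewrite -big_split.
by apply: eq_bigr => j _; rewrite mxE mulrDl.
Qed.

Lemma sqfrobD m n (A B : 'M[R]_(m, n)) :
  sqfrob (A + B) = sqfrob A + 2 * fdot A B + sqfrob B.
Proof.
rewrite /sqfrob /fdot mulr_sumr -!big_split /=; apply: eq_bigr => i _.
rewrite mulr_sumr -!big_split /=; apply: eq_bigr => j _; rewrite mxE; ring.
Qed.

Lemma frob_triangle m n (A B : 'M[R]_(m, n)) : frob (A + B) <= frob A + frob B.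
Proof.
rewrite -[X in _ <= X]ger0_norm ?addr_ge0 ?frob_ge0 //.
rewrite -sqrtr_sqr [frob (A + B)]/frob -/(sqfrob _) ler_sqrt ?sqr_ge0 //.
rewrite sqfrobD sqrrD !sqr_frob.
have := fdot_cauchy_schwarz A B; rewrite ler_norml => /andP [_ h].
by rewrite lerD2r lerD2l mulr2n; lra.
Qed.

Lemma frobN m n (A : 'M[R]_(m, n)) : frob (- A) = frob A.
Proof.
by congr Num.sqrt; apply: eq_bigr => i _; apply: eq_bigr => j _; rewrite mxE sqrrN.
Qed.

Lemma frob_dist m n (A B : 'M[R]_(m, n)) : `|frob A - frob B| <= frob (A - B).
Proof.
have h1 := frob_triangle (A - B) B; rewrite subrK in h1.
have h2 := frob_triangle (B - A) A; rewrite subrK -opprB frobN in h2.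
by rewrite ler_norml; apply/andP; split; lra.
Qed.

Lemma sqfrob_tr m n (A : 'M[R]_(m, n)) : sqfrob A^T = sqfrob A.
Proof.
rewrite /sqfrob exchange_big; apply: eq_bigr => i _; apply: eq_bigr => j _.
by rewrite mxE.
Qed.

Lemma frob_tr m n (A : 'M[R]_(m, n)) : frob A^T = frob A.
Proof. by rewrite /frob -/(sqfrob _) sqfrob_tr. Qed.

Lemma fdot_trace m n (A B : 'M[R]_(m, n)) : fdot A B = \tr (A *m B^T).
Proof.
rewrite /fdot /mxtrace; apply: eq_bigr => i _; rewrite mxE.
by apply: eq_bigr => j _; rewrite mxE.
Qed.

Lemma sqfrob_trace m n (A : 'M[R]_(m, n)) : sqfrob A = \tr (A *m A^T).
Proof.
rewrite -fdot_trace; apply: eq_bigr => i _; apply: eq_bigr => j _.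
by rewrite expr2.
Qed.

Lemma sqfrob_rows m n (A : 'M[R]_(m, n)) : sqfrob A = \sum_i rownorm A i ^+ 2.
Proof.
apply: eq_bigr => i _; rewrite /rownorm sqr_sqrtr //.
by apply: sumr_ge0 => j _; apply: sqr_ge0.
Qed.

Lemma rownorm_ge0 m n (A : 'M[R]_(m, n)) i : 0 <= rownorm A i.
Proof. exact: sqrtr_ge0. Qed.

Lemma rownorm_sqfrob m n (A : 'M[R]_(m, n)) i :
  rownorm A i = Num.sqrt (sqfrob (row i A)).
Proof.
rewrite /rownorm /sqfrob big_ord1; congr Num.sqrt.
by apply: eq_bigr => j _; rewrite mxE.
Qed.

Lemma rownorm_le_norm2inf m n (A : 'M[R]_(m, n)) (c : R) :
  norm2inf A <= c -> forall i, rownorm A i <= c.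
Proof.
move=> h i; apply: le_trans h.
exact: (le_bigmax (0 : R) (fun i => rownorm A i) i).
Qed.

Lemma rowdot_le m p n (A : 'M[R]_(m, n)) (B : 'M[R]_(p, n)) i j :
  `|\sum_l A i l * B j l| <= rownorm A i * rownorm B j.
Proof.
rewrite /rownorm -sqrtrM; last by apply: sumr_ge0 => l _; apply: sqr_ge0.
apply: ler_norm_sqrt; last exact: cauchy_schwarz.
by apply: mulr_ge0; apply: sumr_ge0 => l _; apply: sqr_ge0.
Qed.

Lemma sqfrob_le_norm2inf m n (A : 'M[R]_(m, n)) (c : R) :
  (0 < m)%N -> 0 <= c -> norm2inf A <= Num.sqrt (c / m%:R) -> sqfrob A <= c.
Proof.
move=> m0 c0 h; rewrite sqfrob_rows.
apply: le_trans (_ : \sum_(i < m) (c / m%:R) <= c).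
  apply: ler_sum => i _; rewrite -(@sqr_sqrtr _ (c / m%:R)) ?divr_ge0 ?ler0n //.
  rewrite !expr2; apply: ler_pM; rewrite ?rownorm_ge0 //;
    exact: rownorm_le_norm2inf.
rewrite sumr_const card_ord -[X in X <= _]mulr_natr mulfVK //.
by rewrite pnatr_eq0 -lt0n.
Qed.

Lemma sqfrob_mul m n p (A : 'M[R]_(m, n)) (B : 'M[R]_(n, p)) :
  sqfrob (A *m B) <= sqfrob A * sqfrob B.
Proof.
rewrite /sqfrob mulr_suml; apply: ler_sum => i _.
rewrite [X in _ <= _ * X]exchange_big mulr_sumr; apply: ler_sum => j _.
by rewrite mxE; apply: cauchy_schwarz.
Qed.

Lemma frob_mul m n p (A : 'M[R]_(m, n)) (B : 'M[R]_(n, p)) :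
  frob (A *m B) <= frob A * frob B.
Proof.
rewrite /frob -sqrtrM ?sqfrob_ge0 // ler_sqrt ?sqfrob_mul //.
by apply: mulr_ge0; apply: sqfrob_ge0.
Qed.

Lemma sqfrob_orth m n p (A : 'M[R]_(m, n)) (O : 'M[R]_(n, p)) :
  O *m O^T = 1%:M -> sqfrob (A *m O) = sqfrob A.
Proof. by move=> hO; rewrite !sqfrob_trace trmx_mul mulmxA -(mulmxA A) hO mulmx1. Qed.

Lemma rownorm_orth m n p (A : 'M[R]_(m, n)) (O : 'M[R]_(n, p)) i :
  O *m O^T = 1%:M -> rownorm (A *m O) i = rownorm A i.
Proof. by move=> hO; rewrite !rownorm_sqfrob row_mul sqfrob_orth. Qed.

End Frobenius.

Section PolarDecomposition.
Variable R : rcfType.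

Definition cvsq n (x : 'cV[R]_n) : R := (x^T *m x) 0 0.

Lemma cvsqE n (x : 'cV[R]_n) : cvsq x = \sum_i x i 0 ^+ 2.
Proof. by rewrite /cvsq mxE; apply: eq_bigr => i _; rewrite mxE expr2. Qed.

Lemma cvsq_ge0 n (x : 'cV[R]_n) : 0 <= cvsq x.
Proof. by rewrite cvsqE; apply: sumr_ge0 => i _; apply: sqr_ge0. Qed.

Lemma cvsq_eq0 n (x : 'cV[R]_n) : (cvsq x == 0) = (x == 0).
Proof.
apply/eqP/eqP => [|->]; last by rewrite /cvsq mulmx0 mxE.
rewrite cvsqE => h; apply/matrixP => i j; rewrite ord1 mxE.
have := psumr_eq0P (fun i _ => sqr_ge0 (x i 0)) h (i := i) isT.
by move/eqP; rewrite sqrf_eq0 => /eqP.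
Qed.

Lemma cvsq_gt0 n (x : 'cV[R]_n) : x != 0 -> 0 < cvsq x.
Proof. by move=> x0; rewrite lt_def cvsq_ge0 cvsq_eq0 x0. Qed.

Definition normalize n (x : 'cV[R]_n) : 'cV[R]_n := (Num.sqrt (cvsq x))^-1 *: x.

Lemma normalize_unit n (x : 'cV[R]_n) : x != 0 -> cvsq (normalize x) = 1.
Proof.
move=> /cvsq_gt0 q0; rewrite /cvsq /normalize -scalemxAr trmxZ.
rewrite -scalemxAl scalerA mxE -/(cvsq x) -invfM -expr2 sqr_sqrtr ?ltW //.
by rewrite mulVf ?gt_eqF.
Qed.

Definition e0 n : 'cV[R]_n.+1 := delta_mx 0 0.

Definition householder n (u : 'cV[R]_n.+1) : 'M[R]_n.+1 :=
  let w := e0 n - u in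
  if w == 0 then 1%:M else 1%:M - (2 / cvsq w) *: (w *m w^T).

Lemma householder_sym n (u : 'cV[R]_n.+1) : (householder u)^T = householder u.
Proof.
rewrite /householder; case: ifP => _; first by rewrite tr_scalar_mx.
apply/matrixP => i j; rewrite !mxE eq_sym; congr (_ - _ * _).
by apply: eq_bigr => k _; rewrite !mxE mulrC.
Qed.

Lemma householder_invol n (u : 'cV[R]_n.+1) :
  householder u *m householder u = 1%:M.
Proof.
rewrite /householder; case: ifP => [_|w0]; first by rewrite mulmx1.
set w := e0 n - u in w0 *; set c := cvsq w.
have c0 : c != 0 by rewrite /c cvsq_eq0 w0.
(* w w^T is c times a projector, which makes the reflection an involution. *)
have ww : w *m w^T *m (w *m w^T) = c *: (w *m w^T).
  by rewrite mulmxA -[w *m w^T *m w]mulmxA [w^T *m w]mx11_scalar mul_mx_scalar -scalemxAl.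
rewrite mulmxBl mul1mx mulmxBr mulmx1 -scalemxAl -scalemxAr ww !scalerA.
apply/matrixP => i j; rewrite !mxE; field.
by [].
Qed.

Lemma householder_e0 n (u : 'cV[R]_n.+1) : cvsq u = 1 -> householder u *m e0 n = u.
Proof.
move=> u1; rewrite /householder; case: ifP => [/eqP w0|w0].
  by rewrite mul1mx; apply/eqP; rewrite -subr_eq0 w0.
set w := e0 n - u in w0 *.
have we : w^T *m e0 n = (w 0 0)%:M by rewrite [LHS]mx11_scalar /e0 -colE !mxE.
have ce : cvsq w = 2 * w 0 0.
  rewrite /cvsq /w trmxB mulmxBr !mulmxBl /e0 trmx_delta -!rowE -colE.
  have -> : u^T *m u = 1%:M by rewrite [LHS]mx11_scalar; congr _%:M.
  by rewrite !mxE /=; ring.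
have wn : w 0 0 != 0.
  by apply/eqP => w00; move: w0; rewrite -cvsq_eq0 ce w00 mulr0 eqxx.
rewrite mulmxBl mul1mx -scalemxAl -mulmxA we mul_mx_scalar scalerA ce.
rewrite (_ : 2 / (2 * w 0 0) * w 0 0 = 1) ?scale1r; last by field.
by rewrite /w opprB addrC subrK.
Qed.

Lemma householder_u n (u : 'cV[R]_n.+1) : cvsq u = 1 -> householder u *m u = e0 n.
Proof.
by move=> u1; rewrite -[RHS]mul1mx -(householder_invol u) -mulmxA householder_e0.
Qed.

(* A real symmetric matrix has a real eigenvector; the eigenvalue is read off
   the (real) spectral diagonal of the complexified hermitian matrix. *)
Lemma sym_eigenvector n (A : 'M[R]_n.+1) : A^T = A ->
  exists a (v : 'rV[R]_n.+1), v != 0 /\ v *m A = a *: v.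
Proof.
move=> sA; pose f := real_complex R; pose A' := map_mx f A.
have hA : A' \is hermsymmx.
  apply/is_hermitianmxP; rewrite expr0 scale1r; apply/matrixP => i j.
  have : f (A j i) \is Num.real by apply/complex_realP; exists (A j i).
  by rewrite !mxE CrealE => /eqP ->; rewrite -{1}sA mxE.
have /hermitian_normalmx/orthomx_spectralP eqA := hA.
set P := spectralmx A' in eqA; set D := spectral_diag A' in eqA.
have PU : P \in unitmx by apply: spectral_unit.
have eqPA : P *m A' = diag_mx D *m P by rewrite eqA !mulmxA mulmxV // mul1mx.
have /complex_realP [a ha] : D 0 0 \is Num.real.
  exact: (mxOverP (hermitian_spectral_diag_real hA)).
have row0 : row 0 P != 0.
  apply/negP => /eqP h0; have := unitarymxP (spectral_unitarymx A').
  move=> /(congr1 (row 0)); rewrite row_mul -/P h0 mul0mx.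
  by move=> /rowP /(_ 0); rewrite !mxE eqxx => /eqP; rewrite eq_sym oner_eq0.
have hw : row 0 P *m (A' - (f a)%:M) = 0.
  rewrite mulmxBr -row_mul eqPA mul_diag_mx mul_mx_scalar.
  by apply/rowP => j; rewrite !mxE ha subrr.
have : \det (A - a%:M) == 0.
  have : \det (A' - (f a)%:M) == 0 by apply/det0P; exists (row 0 P).
  by rewrite /A' -map_scalar_mx -map_mxB det_map_mx fmorph_eq0.
move=> /det0P [v v0 hv]; exists a, v; split => //.
by apply/eqP; rewrite -subr_eq0 -mul_mx_scalar -mulmxBr hv.
Qed.

(* Every square matrix has a singular pair: unit vectors u, v and s >= 0 with
   M v = s u and u^T M = s v^T (v is a unit eigenvector of M^T M). *)
Lemma singular_pair n (M : 'M[R]_n.+1) : exists (u v : 'cV[R]_n.+1) (s : R),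
  [/\ cvsq u = 1, cvsq v = 1, 0 <= s, M *m v = s *: u & u^T *m M = s *: v^T].
Proof.
have sMM : (M^T *m M)^T = M^T *m M by rewrite trmx_mul trmxK.
have [a [v0 [v00 hv0]]] := sym_eigenvector sMM.
have v0T : v0^T != 0 by rewrite trmx_eq0.
set v := normalize v0^T.
have v1 : cvsq v = 1 by apply: normalize_unit.
have hv : M^T *m M *m v = a *: v.
  rewrite /v /normalize -scalemxAr -{1}sMM -trmx_mul hv0 trmxZ.
  by rewrite !scalerA mulrC.
have [Mv0|Mv0] := eqVneq (M *m v) 0.
  (* M is singular: take s = 0 and u a unit left null vector of M. *)
  have : \det M^T == 0.
    apply/det0P; exists v^T; last by rewrite -trmx_mul Mv0 trmx0.
    by rewrite trmx_eq0 -cvsq_eq0 v1 oner_eq0.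
  rewrite det_tr => /det0P [w w0 hw].
  have wT0 : w^T != 0 by rewrite trmx_eq0.
  exists (normalize w^T), v, 0; split; rewrite ?normalize_unit ?scale0r //.
  by rewrite /normalize trmxZ trmxK -scalemxAl hw scaler0.
have q0 : 0 < cvsq (M *m v) by apply: cvsq_gt0.
set s := Num.sqrt (cvsq (M *m v)).
have s0 : 0 < s by rewrite sqrtr_gt0.
have sa : s ^+ 2 = a.
  rewrite sqr_sqrtr ?ltW // /cvsq trmx_mul -mulmxA (mulmxA M^T) hv -scalemxAr.
  by rewrite [LHS]mxE -/(cvsq v) v1 mulr1.
exists (normalize (M *m v)), v, s; split => //.
- exact: normalize_unit.
- exact: ltW.
- by rewrite /normalize -/s scalerA divff ?gt_eqF // scale1r.
have vMM : v^T *m M^T *m M = a *: v^T.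
  by rewrite -mulmxA -{1}sMM -trmx_mul hv trmxZ.
rewrite /normalize -/s trmxZ trmx_mul -scalemxAl vMM scalerA -sa.
by congr (_ *: _); field; rewrite gt_eqF.
Qed.

(* Reflecting a singular pair onto e0 on both sides deflates M to a block
   diagonal matrix diag (s, M2). *)
Lemma householder_deflation n (M : 'M[R]_n.+1) :
  exists (Hu Hv : 'M[R]_n.+1) (s : R) (M2 : 'M[R]_n),
  [/\ Hu^T = Hu, Hu *m Hu = 1%:M, Hv^T = Hv, Hv *m Hv = 1%:M &
      Hu *m M *m Hv = block_mx (s%:M : 'M_1) 0 0 M2 /\ 0 <= s].
Proof.
have [u [v [s [u1 v1 s0 hMv huM]]]] := singular_pair M.
set Hu := householder u; set Hv := householder v.
have [Hus Hvs] : Hu^T = Hu /\ Hv^T = Hv by split; apply: householder_sym.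
set M' := Hu *m M *m Hv.
have col0 k : M' k 0 = s * (k == 0)%:R.
  have : M' *m e0 n = s *: e0 n.
    by rewrite /M' -mulmxA householder_e0 // -mulmxA hMv -scalemxAr householder_u.
  by move=> /matrixP/(_ k 0); rewrite /e0 -colE !mxE andbT.
have row0 k : M' 0 k = s * (k == 0)%:R.
  have : (e0 n)^T *m M' = s *: (e0 n)^T.
    rewrite /M' -[in LHS](householder_u u1) trmx_mul Hus !mulmxA.
    rewrite -(mulmxA u^T) householder_invol mulmx1 huM -scalemxAl.
    by rewrite -Hvs -trmx_mul householder_u // trmxZ.
  by move=> /matrixP/(_ 0 k); rewrite /e0 trmx_delta -rowE !mxE.
have l0 : lshift n (0 : 'I_1) = 0 :> 'I_n.+1 by apply: val_inj.
have r0 (j : 'I_n) : (rshift 1 j == 0 :> 'I_n.+1) = false by [].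
have blocks : M' = block_mx (s%:M : 'M_1) 0 0 (drsubmx (M' : 'M_(1 + n))).
  clearbody M'.
  have ul : ulsubmx (M' : 'M_(1 + n)) = s%:M.
    by apply/matrixP => i j; rewrite !ord1 !mxE l0 row0 mulr1.
  have ur : ursubmx (M' : 'M_(1 + n)) = 0.
    by apply/matrixP => i j; rewrite !ord1 !mxE l0 row0 r0 mulr0.
  have dl : dlsubmx (M' : 'M_(1 + n)) = 0.
    by apply/matrixP => i j; rewrite !ord1 !mxE l0 col0 r0 mulr0.
  by rewrite -ul -ur -dl submxK.
by exists Hu, Hv, s, (drsubmx (M' : 'M_(1 + n))); rewrite !householder_invol.
Qed.

Definition psd n (P : 'M[R]_n) : Prop := forall x : 'cV[R]_n, 0 <= (x^T *m P *m x) 0 0.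

Lemma psd_congr n p (P : 'M[R]_n) (H : 'M[R]_(n, p)) : psd P -> psd (H^T *m P *m H).
Proof. by move=> hP x; rewrite !mulmxA -trmx_mul -!mulmxA mulmxA. Qed.

Lemma psd_block n (s : R) (P : 'M[R]_n) :
  0 <= s -> psd P -> psd (block_mx (s%:M : 'M_1) 0 0 P).
Proof.
move=> s0 hP x; rewrite -[x](@vsubmxK _ 1 n) (@tr_col_mx _ 1 n 1).
rewrite (@mul_row_block R 1 1 n 1 n) (@mul_row_col R 1 1 n 1).
rewrite !mulmx0 !addr0 !add0r mxE; apply: addr_ge0; last exact: hP.
by rewrite mul_mx_scalar -scalemxAl mxE mulr_ge0 // -/(cvsq _) cvsq_ge0.
Qed.

Lemma polar_decomposition n (M : 'M[R]_n) : exists Q : 'M[R]_n,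
  [/\ Q^T *m Q = 1%:M, (Q^T *m M)^T = Q^T *m M & psd (Q^T *m M)].
Proof.
elim: n M => [|n IH] M.
  exists 1%:M; split; first by rewrite tr_scalar_mx mul1mx.
    by rewrite [LHS]thinmx0 [RHS]thinmx0.
  by move=> x; rewrite [x]flatmx0 trmx0 !mul0mx mxE.
have [Hu [Hv [s [M2 [Hus Hui Hvs Hvi [defM s0]]]]]] := householder_deflation M.
have [Q2 [Q2o Q2s Q2p]] := IH M2.
pose Q' : 'M[R]_(1 + n) := block_mx 1%:M 0 0 Q2.
pose P' : 'M[R]_(1 + n) := block_mx (s%:M : 'M_1) 0 0 (Q2^T *m M2).
have Q'o : Q'^T *m Q' = 1%:M.
  rewrite /Q' tr_block_mx !trmx0 tr_scalar_mx (@mulmx_block R) Q2o.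
  by rewrite !mulmx0 !mul0mx !addr0 !add0r mulmx1 -scalar_mx_block.
have QM : (Hu *m Q' *m Hv)^T *m M = Hv^T *m P' *m Hv.
  have -> : P' = Q'^T *m (Hu *m M *m Hv).
    rewrite defM /Q' tr_block_mx !trmx0 tr_scalar_mx (@mulmx_block R 1 n 1 n 1 n).
    by rewrite !mulmx0 !mul0mx !addr0 !add0r !mul1mx.
  by rewrite !trmx_mul Hus Hvs !mulmxA -(mulmxA _ Hv Hv) Hvi mulmx1.
exists (Hu *m Q' *m Hv); split; last by rewrite QM; apply/psd_congr/psd_block.
- rewrite !trmx_mul Hus Hvs !mulmxA -(mulmxA (Hv *m Q'^T) Hu Hu) Hui mulmx1.
  by rewrite -(mulmxA Hv Q'^T Q') Q'o mulmx1 Hvi.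
- rewrite QM !trmx_mul trmxK /P' (@tr_block_mx _ 1 n 1 n) !trmx0 tr_scalar_mx Q2s.
  by rewrite !mulmxA.
Qed.

End PolarDecomposition.

Section ResidualEstimates.
Variable R : rcfType.

(* The linearization of X X^T around Y errs by (X - Y)(X - Y)^T. *)
Lemma linearization_error d r (X Y : 'M[R]_(d, r)) (S W : 'M[R]_d) :
  `|frob (X *m X^T + S - W) -
    frob (Y *m Y^T + Y *m (X - Y)^T + (X - Y) *m Y^T + S - W)| <= frob (X - Y) ^+ 2.
Proof.
apply: le_trans (frob_dist _ _) _.
have -> : X *m X^T + S - W - (Y *m Y^T + Y *m (X - Y)^T + (X - Y) *m Y^T + S - W)
    = (X - Y) *m (X - Y)^T.
  rewrite !trmxB !mulmxBr !mulmxBl.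
  by apply/matrixP => i j; rewrite !mxE; ring.
by apply: le_trans (frob_mul _ _) _; rewrite frob_tr expr2.
Qed.

(* On factors of Frobenius norm at most K the residual is Lipschitz, since
   X1 X1^T - X2 X2^T = X1 (X1 - X2)^T + (X1 - X2) X2^T. *)
Lemma residual_lipschitz d r (X1 X2 : 'M[R]_(d, r)) (S1 S2 W : 'M[R]_d) (K : R) :
  frob X1 <= K -> frob X2 <= K ->
  `|frob (X1 *m X1^T + S1 - W) - frob (X2 *m X2^T + S2 - W)| <=
   2 * K * frob (X1 - X2) + frob (S1 - S2).
Proof.
move=> h1 h2; apply: le_trans (frob_dist _ _) _.
have -> : X1 *m X1^T + S1 - W - (X2 *m X2^T + S2 - W) =
    X1 *m (X1 - X2)^T + (X1 - X2) *m X2^T + (S1 - S2).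
  rewrite trmxB mulmxBr mulmxBl.
  by apply/matrixP => i j; rewrite !mxE; ring.
apply: le_trans (frob_triangle _ _) _; rewrite lerD2r.
apply: le_trans (frob_triangle _ _) _.
apply: le_trans (lerD (frob_mul _ _) (frob_mul _ _)) _.
have := frob_ge0 (X1 - X2); have := frob_ge0 X1; have := frob_ge0 X2.
by rewrite !frob_tr; nra.
Qed.

Lemma mxtrace_rot m n p q (A : 'M[R]_(m, n)) (B : 'M[R]_(n, p))
  (C : 'M[R]_(p, q)) (E : 'M[R]_(q, m)) :
  \tr (A *m B *m C *m E) = \tr (E *m A *m B *m C).
Proof. by rewrite mxtrace_mulC !mulmxA. Qed.

Lemma aligned_quadratic_lower_bound d r (Z D : 'M[R]_(d, r)) (g : R) :
  (Z^T *m D)^T = Z^T *m D ->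
  0 <= \tr ((Z^T *m Z + Z^T *m D) *m (D^T *m D)) ->
  g <= \tr (Z^T *m Z *m (D^T *m D)) ->
  g / 2 <= sqfrob (Z *m D^T + D *m Z^T + D *m D^T).
Proof.
move=> As hP hg.
set A := Z^T *m D in As hP *; set B := D^T *m D in hP hg *.
set G := Z^T *m Z in hP hg *.
have Bs : B^T = B by rewrite /B trmx_mul trmxK.
rewrite mulmxDl mxtraceD in hP.
set t := \tr (A *m B) in hP; set tg := \tr (G *m B) in hP hg.
have e1 : sqfrob (Z *m D^T) = tg.
  by rewrite /tg /G /B sqfrob_trace trmx_mul trmxK !mulmxA [LHS]mxtrace_rot.
have e2 : sqfrob (D *m Z^T) = tg by rewrite -sqfrob_tr trmx_mul trmxK e1.
have e3 : sqfrob (D *m D^T) = sqfrob B.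
  by rewrite !sqfrob_trace Bs trmx_mul trmxK /B !mulmxA [LHS]mxtrace_rot.
have e4 : fdot (Z *m D^T) (D *m Z^T) = sqfrob A.
  rewrite (_ : sqfrob A = \tr (A^T *m A^T)); last by rewrite sqfrob_trace As.
  by rewrite fdot_trace /A !trmx_mul !trmxK !mulmxA [LHS]mxtrace_rot.
have e5 : fdot (Z *m D^T) (D *m D^T) = t.
  rewrite fdot_trace /t /A /B trmx_mul trmxK !mulmxA -[LHS]mxtrace_tr.
  by rewrite !trmx_mul !trmxK !mulmxA [LHS]mxtrace_rot.
have e6 : fdot (D *m Z^T) (D *m D^T) = t.
  rewrite fdot_trace /t /A /B trmx_mul trmxK !mulmxA.
  by rewrite [LHS]mxtrace_rot [LHS]mxtrace_rot [LHS]mxtrace_rot.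
rewrite !sqfrobD !fdotDl e1 e2 e3 e4 e5 e6.
have := fdot_cauchy_schwarz A B; rewrite ler_norml => /andP [hAB _].
rewrite fdot_trace Bs -/t in hAB.
have fa := frob_ge0 A; have fb := frob_ge0 B.
have k : 0 <= 2 * frob A ^+ 2 - 5 / 2 * frob A * frob B + frob B ^+ 2.
  have -> : 2 * frob A ^+ 2 - 5 / 2 * frob A * frob B + frob B ^+ 2 =
    2 * (frob A - 5 / 8 * frob B) ^+ 2 + 7 / 32 * frob B ^+ 2 by field.
  by have := sqr_ge0 (frob A - 5 / 8 * frob B); have := sqr_ge0 (frob B); lra.
by rewrite !sqr_frob in k; lra.
Qed.

(* tr (P D^T D) = sum_i D_i P D_i^T is nonnegative for psd P. *)
Lemma psd_trace_ge0 d r (P : 'M[R]_r) (D : 'M[R]_(d, r)) :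
  psd P -> 0 <= \tr (P *m (D^T *m D)).
Proof.
move=> hP; rewrite mxtrace_mulC -mulmxA mxtrace_mulC.
apply: sumr_ge0 => i _.
have -> : (D *m P *m D^T) i i = ((row i D)^T^T *m P *m (row i D)^T) 0 0.
  rewrite trmxK !mxE; apply: eq_bigr => k _; rewrite !mxE; congr (_ * _).
  by apply: eq_bigr => l _; rewrite !mxE.
exact: hP.
Qed.

(* If all singular values of Xs are at least s, then for any orthogonal Q,
   tr ((Xs Q)^T (Xs Q) D^T D) = ||D Q^T V Sigma||^2 >= s^2 ||D||^2. *)
Lemma orbit_curvature d r (Xs U : 'M[R]_(d, r)) (V Q : 'M[R]_r)
    (sig : 'I_r -> R) (D : 'M[R]_(d, r)) (s : R) :
  U^T *m U = 1%:M -> V^T *m V = 1%:M -> Q^T *m Q = 1%:M ->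
  Xs = U *m diag_mx (\row_j sig j) *m V^T -> (forall j, 0 <= s <= sig j) ->
  s ^+ 2 * sqfrob D <= \tr ((Xs *m Q)^T *m (Xs *m Q) *m (D^T *m D)).
Proof.
move=> hU hV hQ eX hs.
have -> : \tr ((Xs *m Q)^T *m (Xs *m Q) *m (D^T *m D)) = sqfrob (D *m (Xs *m Q)^T).
  set W := (Xs *m Q)^T; rewrite -[Xs *m Q]trmxK -/W.
  by rewrite sqfrob_trace trmx_mul !mulmxA [LHS]mxtrace_rot.
have hO : (Q^T *m V) *m (Q^T *m V)^T = 1%:M.
  by rewrite trmx_mul trmxK -mulmxA (mulmxA V) (mulmx1C hV) mul1mx.
have -> : D *m (Xs *m Q)^T = D *m (Q^T *m V) *m diag_mx (\row_j sig j) *m U^T.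
  by rewrite eX !trmx_mul trmxK tr_diag_mx !mulmxA.
rewrite sqfrob_orth ?trmxK // -(sqfrob_orth D hO).
move: (D *m (Q^T *m V)) => K.
(* Scaling column j by sig j >= s scales its squared norm by at least s^2. *)
rewrite /sqfrob mulr_sumr; apply: ler_sum => i _; rewrite mulr_sumr.
apply: ler_sum => j _; rewrite mul_mx_diag !mxE exprMn [X in _ <= X]mulrC.
have /andP [s0 sj] := hs j.
by rewrite ler_wpM2r ?sqr_ge0 // lerXn2r // ?nnegrE // (le_trans s0 sj).
Qed.

Lemma singular_value_le1 d r (Xs U : 'M[R]_(d, r)) (V : 'M[R]_r)
    (sig : 'I_r -> R) (l : 'I_r) :
  U^T *m U = 1%:M -> V^T *m V = 1%:M ->
  Xs = U *m diag_mx (\row_j sig j) *m V^T -> opnorm_le Xs 1 -> sig l ^+ 2 <= 1.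
Proof.
move=> hU hV eX hop.
set e : 'cV[R]_r := delta_mx l 0.
have ee : cvsq e = 1 by rewrite /cvsq /e trmx_delta mul_delta_mx mxE !eqxx.
have vnormE n (x : 'cV[R]_n) : vnorm x = Num.sqrt (cvsq x) by rewrite cvsqE.
have De : diag_mx (\row_j sig j) *m e = sig l *: e.
  apply/matrixP => i j; rewrite mul_diag_mx !mxE.
  by case: (eqVneq i l) => [->|nl]; rewrite ?mulr0 //= (negbTE nl) /= mulr0.
have e1 : cvsq (V *m e) = cvsq e.
  by rewrite /cvsq trmx_mul -mulmxA (mulmxA V^T) hV mul1mx.
have e2 : cvsq (Xs *m (V *m e)) = sig l ^+ 2 * cvsq e.
  rewrite /cvsq eX -!mulmxA (mulmxA V^T) hV mul1mx De -!scalemxAr.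
  rewrite trmxZ -scalemxAl scalerA -expr2 mxE.
  by rewrite trmx_mul -mulmxA (mulmxA U^T) hU mul1mx.
have := hop (V *m e); rewrite !vnormE e1 e2 ee mul1r mulr1 sqrtr1.
by rewrite -[X in _ <= X]sqrtr1 ler_sqrt.
Qed.

Lemma perturbation_entry_le d r (Xm Z Dl : 'M[R]_(d, r)) (rho : R) i j :
  (forall i, rownorm Xm i <= rho) -> (forall i, rownorm Z i <= rho) ->
  `|(Dl *m Xm^T + Z *m Dl^T) i j| <= rho * (rownorm Dl i + rownorm Dl j).
Proof.
move=> hX hZ; rewrite !mxE.
have -> : \sum_l Dl i l * Xm^T l j = \sum_l Dl i l * Xm j l.
  by apply: eq_bigr => l _; rewrite mxE.
have -> : \sum_l Z i l * Dl^T l j = \sum_l Z i l * Dl j l.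
  by apply: eq_bigr => l _; rewrite mxE.
apply: le_trans (ler_normD _ _) _.
have := rowdot_le Dl Xm i j; have := rowdot_le Z Dl i j.
have := hX j; have := hZ i; have := rownorm_ge0 Dl i; have := rownorm_ge0 Dl j.
have := rownorm_ge0 Xm j; have := rownorm_ge0 Z i; nra.
Qed.

Lemma incoherent_cross_term d r (Xm Z Dl : 'M[R]_(d, r)) (T : 'M[R]_d) (rho kap : R) :
  (forall i, rownorm Xm i <= rho) -> (forall i, rownorm Z i <= rho) ->
  T^T = T -> 0 <= kap -> 0 <= rho ->
  (forall i, col_l1 T i <= kap * Num.sqrt (\sum_j T j i ^+ 2)) ->
  `|fdot (Dl *m Xm^T + Z *m Dl^T) T| <= 2 * rho * kap * frob Dl * frob T.
Proof.
move=> hX hZ Ts k0 rho0 hT.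
set a := fun i => rownorm Dl i.
have Tsym i j : T i j = T j i by rewrite -{1}Ts mxE.
have bound1 : `|fdot (Dl *m Xm^T + Z *m Dl^T) T| <=
    \sum_i \sum_j rho * (a i + a j) * `|T i j|.
  apply: le_trans (ler_norm_sum _ _ _) _; apply: ler_sum => i _.
  apply: le_trans (ler_norm_sum _ _ _) _; apply: ler_sum => j _.
  by rewrite normrM ler_wpM2r // perturbation_entry_le.
(* By symmetry of T both halves of the double sum are sum_i a_i ||T e_i||_1. *)
have halves : \sum_i \sum_j rho * (a i + a j) * `|T i j| =
    2 * rho * (\sum_i a i * col_l1 T i).
  have split_i i : \sum_j rho * (a i + a j) * `|T i j| =
      rho * (a i * col_l1 T i) + \sum_j rho * (a j * `|T i j|).
    rewrite /col_l1 !mulr_sumr -big_split /=; apply: eq_bigr => j _.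
    by rewrite Tsym; ring.
  rewrite (eq_bigr _ (fun i _ => split_i i)) big_split /= -mulr_sumr.
  rewrite exchange_big /= [X in _ + X = _](_ : _ = rho * \sum_i a i * col_l1 T i).
    by ring.
  rewrite mulr_sumr; apply: eq_bigr => j _.
  by rewrite /col_l1 !mulr_sumr; apply: eq_bigr => i _.
have bound2 : \sum_i a i * col_l1 T i <= kap * (frob Dl * frob T).
  apply: le_trans (_ : \sum_i a i * (kap * Num.sqrt (\sum_j T j i ^+ 2)) <= _).
    by apply: ler_sum => i _; apply: ler_wpM2l; rewrite ?rownorm_ge0.
  rewrite (eq_bigr (fun i => kap * (a i * Num.sqrt (\sum_j T j i ^+ 2)))); last first.
    by move=> i _; ring.
  rewrite -mulr_sumr ler_wpM2l //; apply: le_trans (ler_norm _) _.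
  rewrite /frob -sqrtrM ?sqfrob_ge0 //; apply: ler_norm_sqrt.
    by apply: mulr_ge0; apply: sqfrob_ge0.
  apply: le_trans (cauchy_schwarz xpredT _ _) _.
  have -> : \sum_i Num.sqrt (\sum_j T j i ^+ 2) ^+ 2 = sqfrob T.
    rewrite /sqfrob exchange_big; apply: eq_bigr => i _.
    by rewrite sqr_sqrtr //; apply: sumr_ge0 => j _; apply: sqr_ge0.
  by rewrite -/(sqfrob Dl) -/(sqfrob T) [sqfrob Dl]sqfrob_rows.
apply: le_trans bound1 _; rewrite halves.
by have := bound2; nra.
Qed.

(* Cone condition: if ||S e_i||_1 <= ||Ss e_i||_1 and the column Ss e_i has at
   most k nonzero entries, then T = S - Ss satisfies
   ||T e_i||_1 <= 2 sqrt k ||T e_i||_2 (its l1 mass off the support of Ss e_i is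
   dominated by the mass on it). *)
Lemma sparse_cone d (S Ss : 'M[R]_d) (k : nat) (i : 'I_d) :
  col_l1 S i <= col_l1 Ss i ->
  leq #|[set j : 'I_d | Ss j i != 0]| k ->
  col_l1 (S - Ss) i <= 2 * Num.sqrt k%:R * Num.sqrt (\sum_j (S - Ss) j i ^+ 2).
Proof.
move=> hS hk.
set Om := [set j : 'I_d | Ss j i != 0]; set T := S - Ss.
have split_sum (F : 'I_d -> R) :
    \sum_j F j = \sum_(j | j \in Om) F j + \sum_(j | j \notin Om) F j.
  by rewrite (bigID (fun j => j \in Om)).
have off j : j \notin Om -> Ss j i = 0 by rewrite inE negbK => /eqP.
have off_le_on : \sum_(j | j \notin Om) `|T j i| <= \sum_(j | j \in Om) `|T j i|.
  have e1 : \sum_(j | j \notin Om) `|T j i| = \sum_(j | j \notin Om) `|S j i|.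
    by apply: eq_bigr => j hj; rewrite !mxE off // subr0.
  have e2 : \sum_(j | j \notin Om) `|Ss j i| = 0.
    by apply: big1 => j hj; rewrite off // normr0.
  move: hS; rewrite /col_l1 (split_sum (fun j => `|S j i|)).
  rewrite (split_sum (fun j => `|Ss j i|)) e2 addr0 e1 -lerBrDl => h.
  apply: le_trans h _; rewrite -sumrB; apply: ler_sum => j _.
  by rewrite !mxE distrC lerB_dist.
have on_le : \sum_(j | j \in Om) `|T j i| <=
    Num.sqrt k%:R * Num.sqrt (\sum_j T j i ^+ 2).
  rewrite -sqrtrM ?ler0n //; apply: le_trans (ler_norm _) _; apply: ler_norm_sqrt.
    by apply: mulr_ge0; rewrite ?ler0n //; apply: sumr_ge0 => j _; apply: sqr_ge0.
  have := cauchy_schwarz (fun j => j \in Om) (fun _ => 1) (fun j => `|T j i|).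
  rewrite (eq_bigr (fun j => `|T j i|)); last by move=> j _; rewrite mul1r.
  move=> /le_trans; apply; apply: ler_pM.
  - by apply: sumr_ge0 => j _; apply: sqr_ge0.
  - by apply: sumr_ge0 => j _; apply: sqr_ge0.
  - rewrite (eq_bigr (fun _ => 1)); last by move=> j _; rewrite expr1n.
    by rewrite sumr_const ler_nat.
  - rewrite (split_sum (fun j => T j i ^+ 2)) -[X in X <= _]addr0 lerD //.
      by apply: ler_sum => j _; rewrite real_normK ?num_real.
    by apply: sumr_ge0 => j _; apply: sqr_ge0.
by rewrite /col_l1 split_sum; lra.
Qed.

End ResidualEstimates.

Section RestrictedStrongConvexity.
Variable R : rcfType.

Lemma gram_orth d r (Xs : 'M[R]_(d, r)) (Q : 'M[R]_r) :
  Q^T *m Q = 1%:M -> Xs *m Q *m (Xs *m Q)^T = Xs *m Xs^T.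
Proof. by move=> hQ; rewrite trmx_mul mulmxA -(mulmxA Xs) (mulmx1C hQ) mulmx1. Qed.

Lemma sigma_last_svd d r (Xs : 'M[R]_(d, r)) (sr : R) :
  (0 < r)%N -> opnorm_le Xs 1 -> sigma_last Xs sr ->
  exists (U : 'M[R]_(d, r)) (V : 'M[R]_r) (sig : 'I_r -> R),
    [/\ U^T *m U = 1%:M, V^T *m V = 1%:M, Xs = U *m diag_mx (\row_j sig j) *m V^T,
        forall j, 0 <= sr <= sig j & sr ^+ 2 <= 1].
Proof.
move=> r0 hop [sig [[U [V [hU hV eX sig0 sig_mono]]] hlast]].
have lr : (r.-1 < r)%N by rewrite prednK.
have srl : sig (Ordinal lr) = sr by apply: hlast.
exists U, V, sig; split => //; last by rewrite -srl (singular_value_le1 _ hU hV eX).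
move=> j; rewrite -srl sig0 /=; apply: sig_mono.
by rewrite /= -ltnS prednK.
Qed.

(* Aligning Xs to X by the orthogonal factor of a polar decomposition of
   Xs^T X gives ||X X^T - Xs Xs^T||^2 >= s^2 ||X - Xs Q||^2 / 2 whenever all
   singular values of Xs are at least s. *)
Lemma aligned_factor d r (Xs U X : 'M[R]_(d, r)) (V : 'M[R]_r) (sig : 'I_r -> R) (s : R) :
  U^T *m U = 1%:M -> V^T *m V = 1%:M ->
  Xs = U *m diag_mx (\row_j sig j) *m V^T -> (forall j, 0 <= s <= sig j) ->
  exists Q : 'M[R]_r, Q^T *m Q = 1%:M /\
    s ^+ 2 * sqfrob (X - Xs *m Q) / 2 <= sqfrob (X *m X^T - Xs *m Xs^T).
Proof.
move=> hU hV eX hs.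
have [Q [hQ Ps Pp]] := polar_decomposition (Xs^T *m X).
exists Q; split => //.
set Z := Xs *m Q; set D := X - Z.
have eZZ : Z *m Z^T = Xs *m Xs^T by apply: gram_orth.
have ZX : Z^T *m Z + Z^T *m D = Q^T *m (Xs^T *m X).
  by rewrite -mulmxDr /D addrC subrK /Z trmx_mul mulmxA.
have -> : X *m X^T - Xs *m Xs^T = Z *m D^T + D *m Z^T + D *m D^T.
  rewrite -eZZ /D !trmxB !mulmxBr !mulmxBl.
  by apply/matrixP => i j; rewrite !mxE; ring.
apply: aligned_quadratic_lower_bound.
- have -> : Z^T *m D = Q^T *m (Xs^T *m X) - Z^T *m Z by rewrite -ZX addrC addKr.
  by rewrite trmxB Ps trmx_mul trmxK.
- by rewrite ZX; apply: psd_trace_ge0.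
- exact: orbit_curvature hU hV hQ eX hs.
Qed.

Lemma cross_term_bound d r (Xs X : 'M[R]_(d, r)) (Q : 'M[R]_r) (S Ss : 'M[R]_d)
    (k : nat) (rho : R) :
  Q^T *m Q = 1%:M -> 0 <= rho ->
  (forall i, rownorm Xs i <= rho) -> (forall i, rownorm X i <= rho) ->
  S^T = S -> Ss^T = Ss -> (forall i, col_l1 S i <= col_l1 Ss i) ->
  (forall j : 'I_d, leq #|[set i : 'I_d | Ss i j != 0]| k) ->
  `|fdot (X *m X^T - Xs *m Xs^T) (S - Ss)| <=
    4 * (rho * Num.sqrt k%:R) * frob (X - Xs *m Q) * frob (S - Ss).
Proof.
move=> hQ rho0 hXs hX Ssym Sssym hl1 hk.
have -> : X *m X^T - Xs *m Xs^T = (X - Xs *m Q) *m X^T + Xs *m Q *m (X - Xs *m Q)^T.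
  rewrite trmxB mulmxBr mulmxBl gram_orth //.
  by apply/matrixP => i j; rewrite !mxE; ring.
have -> : 4 * (rho * Num.sqrt k%:R) = 2 * rho * (2 * Num.sqrt k%:R) by ring.
apply: incoherent_cross_term => //.
- by move=> i; rewrite rownorm_orth ?(mulmx1C hQ).
- by rewrite trmxB Ssym Sssym.
- by rewrite mulr_ge0 ?sqrtr_ge0.
- by move=> i; apply: sparse_cone.
Qed.

(* The scalar core of the lower bound: with e >= s^2 a^2 / 2 the squared norm
   of E, f >= -4 c a t the cross term and delta <= a, the expansion
   e + 2 f + t^2 dominates (s^2 / 2 - 10 c)(delta^2 + t^2). *)
Lemma quadratic_inequality (s c a t delta e f : R) :
  0 <= c -> 0 <= t -> 0 <= delta <= a -> s ^+ 2 <= 1 ->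
  s ^+ 2 * a ^+ 2 / 2 <= e -> - (4 * c * a * t) <= f -> 0 <= e + 2 * f + t ^+ 2 ->
  (2^-1 * s ^+ 2 - 10 * c) * (delta ^+ 2 + t ^+ 2) <= e + 2 * f + t ^+ 2.
Proof.
move=> c0 t0 /andP [dl0 dla] s1 he hf hsum.
have [coef_le0|coef_gt0] := lerP (2^-1 * s ^+ 2 - 10 * c) 0.
  by apply: le_trans hsum; apply: mulr_le0_ge0; rewrite // addr_ge0 ?sqr_ge0.
have dla2 : delta ^+ 2 <= a ^+ 2 by rewrite lerXn2r // ?nnegrE (le_trans dl0).
have amgm : 2 * (a * t) <= a ^+ 2 + t ^+ 2 by have := sqr_ge0 (a - t); nra.
have := mulr_ge0 c0 (sqr_ge0 s); have := mulr_ge0 c0 (sqr_ge0 t).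
have := mulr_ge0 c0 (sqr_ge0 a); have := mulr_ge0 c0 (mulr_ge0 (le_trans dl0 dla) t0).
have := sqr_ge0 s; have := sqr_ge0 t; nra.
Qed.

Lemma residual_lower_bound d r (k : nat) (Xs X : 'M[R]_(d, r)) (S Ss : 'M[R]_d)
    (sr rho delta : R) :
  (0 < r)%N -> opnorm_le Xs 1 -> sigma_last Xs sr -> 0 <= rho ->
  (forall i, rownorm Xs i <= rho) -> (forall i, rownorm X i <= rho) ->
  S^T = S -> Ss^T = Ss -> (forall i, col_l1 S i <= col_l1 Ss i) ->
  (forall j : 'I_d, leq #|[set i : 'I_d | Ss i j != 0]| k) ->
  is_dist_orbit Xs X delta ->
  (2^-1 * sr ^+ 2 - 10 * (rho * Num.sqrt k%:R)) * (delta ^+ 2 + frob (S - Ss) ^+ 2)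
    <= frob (X *m X^T + S - (Xs *m Xs^T + Ss)) ^+ 2.
Proof.
move=> r0 hop hsig rho0 hXs hX Ssym Sssym hl1 hk [delta_le delta_glb].
have [U [V [sig [hU hV eX hs sr1]]]] := sigma_last_svd r0 hop hsig.
have [Q [hQ hE]] := aligned_factor X hU hV eX hs.
have := cross_term_bound hQ rho0 hXs hX Ssym Sssym hl1 hk.
rewrite ler_norml => /andP [hcross _].
have -> : X *m X^T + S - (Xs *m Xs^T + Ss) = (X *m X^T - Xs *m Xs^T) + (S - Ss).
  by apply/matrixP => i j; rewrite !mxE; ring.
rewrite [in X in _ <= X]sqr_frob sqfrobD -(sqr_frob (S - Ss)).
apply: (quadratic_inequality (a := frob (X - Xs *m Q))).
- by rewrite mulr_ge0 ?sqrtr_ge0.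
- exact: frob_ge0.
- by rewrite delta_le // andbT; apply: delta_glb => Q' _; apply: frob_ge0.
- exact: sr1.
- by rewrite sqr_frob.
- by rewrite !mulrA in hcross *; lra.
- by rewrite sqr_frob -sqfrobD sqfrob_ge0.
Qed.

End RestrictedStrongConvexity.

Theorem lemma8p2 (R : rcfType) (d r k : nat) (nu : R)
  (Xs : 'M[R]_(d, r)) (Ss : 'M[R]_d) (sr : R) :
  (0 < d)%N -> (0 < r)%N -> (0 < k)%N -> 0 < nu ->
  \rank Xs = r ->
  opnorm_le Xs 1 ->
  norm2inf Xs <= Num.sqrt (nu * r%:R / d%:R) ->
  symmetric_mx Ss ->
  (forall j : 'I_d, leq #|[set i : 'I_d | Ss i j != 0]| k) ->
  sigma_last Xs sr ->
  let W := Xs *m Xs^T + Ss in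
  let inX := fun X : 'M[R]_(d, r) => norm2inf X <= Num.sqrt (nu * r%:R / d%:R) in
  let inS := fun S : 'M[R]_d =>
    symmetric_mx S /\ (forall i : 'I_d, col_l1 S i <= col_l1 Ss i) in
  let F := fun (X : 'M[R]_(d, r)) (S : 'M[R]_d) => frob (X *m X^T + S - W) in
  let FY := fun (Y X : 'M[R]_(d, r)) (S : 'M[R]_d) =>
    frob (Y *m Y^T + Y *m (X - Y)^T + (X - Y) *m Y^T + S - W) in
  (forall (X Y : 'M[R]_(d, r)) (S : 'M[R]_d), inX X -> inX Y -> inS S ->
     (forall delta, is_dist_orbit Xs X delta ->
        F X S ^+ 2 >= (2^-1 * sr ^+ 2 - 10 * Num.sqrt (nu * r%:R * k%:R / d%:R))
                      * (delta ^+ 2 + frob (S - Ss) ^+ 2))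
     /\ `|F X S - FY Y X S| <= frob (X - Y) ^+ 2) /\
  (forall (X1 X2 : 'M[R]_(d, r)) (S1 S2 : 'M[R]_d),
     inX X1 -> inX X2 -> inS S1 -> inS S2 ->
     `|F X1 S1 - F X2 S2| <= 2 * Num.sqrt (nu * r%:R) * frob (X1 - X2) + frob (S1 - S2)).
Proof.
move=> d0 r0 _ nu0 _ hop hXs Ssym hk hsig W inX inS F FY.
have nur0 : 0 <= nu * r%:R by rewrite mulr_ge0 // ltW.
have frob_inX X : inX X -> frob X <= Num.sqrt (nu * r%:R).
  by move=> hX; rewrite /frob -/(sqfrob X) ler_sqrt //; apply: sqfrob_le_norm2inf.
split=> [X Y S hX hY [hSsym hl1]|X1 X2 S1 S2 h1 h2 _ _]; last first.
  exact: residual_lipschitz (frob_inX _ h1) (frob_inX _ h2).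
split=> [delta hdelta|]; last exact: linearization_error.
(* sqrt (nu r k / d) = rho sqrt k with rho = sqrt (nu r / d) the row bound. *)
rewrite mulrAC sqrtrM ?divr_ge0 ?ler0n //.
exact: residual_lower_bound r0 hop hsig (sqrtr_ge0 _) (rownorm_le_norm2inf hXs)
  (rownorm_le_norm2inf hX) hSsym Ssym hl1 hk hdelta.
Qed.
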